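(* Write $\mathbb Z_2=\{1,\tau\}$ and let $\tau$ act on $\mathbb Z^n$ by $\tau\cdot\lambda=-\lambda$; form the semidirect product $\mathbb Z^n\rtimes\mathbb Z_2$, whose elements are written $\lambda\cdot x$ with $\lambda\in\mathbb Z^n$, $x\in\mathbb Z_2$. Let $e_1,\dots,e_n$ be the standard basis of $\mathbb Z^n$, and set $L_n^\circ=\{\lambda\cdot1 : \sum_i\lambda_i=0\}$ and $L_n^\tau=\{\lambda\cdot\tau:\sum_i\lambda_i=1\}$. Then: (1) The assignment $g_i\mapsto e_i\cdot\tau$ defines an injective group morphism $L_n\to\mathbb Z^n\rtimes\mathbb Z_2$. (2) Its image is $L_n^\circ\cup L_n^\tau$. (3) $L_n\cong\mathbb Z^{n-1}\rtimes\mathbb Z_2$, where $\mathbb Z_2$ acts on $\mathbb Z^{n-1}$ by $\lambda\mapsto-\lambda$.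
   Context: $L_n=\mathbb Z_2^{*n}/\langle abc=cba \mid a,b,c\in\{g_1,\dots,g_n\}\rangle$, where $g_1,\dots,g_n$ (with $g_i^2=1$) are the standard generators of the free product $\mathbb Z_2^{*n}$; we keep the notation $g_i$ for their images in $L_n$. $L_n$ is the diagonal group of $A_o^*(n)$, i.e. $C^*(L_n)=A_o^*(n)/\langle u_{ij}=0,\ i\ne j\rangle$ with $g_i$ the image of $u_{ii}$. *)

From HB Require Import structures.
From mathcomp Require Import all_boot all_order all_algebra.
From Stdlib Require Import Relations.
Set Implicit Arguments. Unset Strict Implicit. Unset Printing Implicit Defensive.
Import Order.TTheory GRing.Theory Num.Theory.
Local Open Scope ring_scope.

(* L_n is the
   quotient of the free monoid seq 'I_n by the congruence generated by
   g_i g_i = 1 and abc = cba (a,b,c generators).  Since all generators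
   are involutions this monoid quotient is the group
   Z_2^{*n} / <abc = cba>. *)
Inductive Lstep (n : nat) : seq 'I_n -> seq 'I_n -> Prop :=
| Lstep_inv (u v : seq 'I_n) (i : 'I_n) :
    Lstep (u ++ [:: i; i] ++ v) (u ++ v)
| Lstep_rel (u v : seq 'I_n) (a b c : 'I_n) :
    Lstep (u ++ [:: a; b; c] ++ v) (u ++ [:: c; b; a] ++ v).

Definition Lequiv (n : nat) : relation (seq 'I_n) :=
  clos_refl_sym_trans (seq 'I_n) (@Lstep n).

(* An element lambda . x is a pair (lambda, x) with lambda : 'rV[int]_m
   and x : bool, where true stands for tau and false for 1.
   tau acts by lambda |-> -lambda. *)
Definition sdelt (m : nat) := ('rV[int]_m * bool)%type.

Definition sdact (m : nat) (x : bool) (mu : 'rV[int]_m) : 'rV[int]_m :=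
  if x then - mu else mu.

Definition sdmul (m : nat) (p q : sdelt m) : sdelt m :=
  (p.1 + sdact p.2 q.1, xorb p.2 q.2).

Definition sdone (m : nat) : sdelt m := (0, false).

Definition stdbasis (n : nat) (i : 'I_n) : 'rV[int]_n := delta_mx 0 i.

Definition gen_img (n : nat) (i : 'I_n) : sdelt n := (stdbasis i, true).

Definition phi (n : nat) (w : seq 'I_n) : sdelt n :=
  foldr (fun i acc => sdmul (gen_img i) acc) (sdone n) w.

Definition coord_sum (n : nat) (l : 'rV[int]_n) : int := \sum_(i < n) l 0 i.

Definition Lcirc (n : nat) (p : sdelt n) : Prop :=
  p.2 = false /\ coord_sum p.1 = 0.
Definition Ltau (n : nat) (p : sdelt n) : Prop :=
  p.2 = true /\ coord_sum p.1 = 1.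

From HB Require Import structures.
From mathcomp Require Import all_boot all_order all_algebra.
From Stdlib Require Import Relations Setoid Morphisms.
Import Order.TTheory GRing.Theory Num.Theory.
Local Open Scope ring_scope.

(* The map
   phi is a monoid morphism from words to the semidirect product that kills
   both defining relations, hence factors through L_n.  Every phi w lies in
   L_n^o u L_n^tau, i.e. satisfies the parity condition
   "coordinate sum = 1 if the Z_2 part is tau, 0 otherwise".

   Injectivity and surjectivity rest on normal forms.  Fix a generator g_z.
   The words (g_i g_z)^k commute with each other, are conjugated to their
   inverses by g_z, and phi maps them to k (e_i - e_z).  Hence every word is
   equivalent to the normal form nf (phi w), a product of such powers
   possibly followed by g_z, and phi (nf p) = p for every p satisfying the
   parity condition.  Finally, forgetting the first coordinate is a morphism
   Z^n x| Z_2 -> Z^(n-1) x| Z_2 which is bijective on the parity elements,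
   so composing it with phi gives the isomorphism of part (3). *)

Lemma flatten_nseq_shift (T : Type) (a b : T) (m : nat) :
  a :: flatten (nseq m [:: b; a]) = flatten (nseq m [:: a; b]) ++ [:: a].
Proof. by elim: m => //= m ->. Qed.

Section WordCongruence.
Context {n : nat}.
Implicit Types (u v w : seq 'I_n) (i : 'I_n).

#[local] Instance Lequiv_Equivalence : Equivalence (@Lequiv n).
Proof. split; [exact: rst_refl | exact: rst_sym | exact: rst_trans]. Qed.

Lemma Lstep_frame (a b u v : seq 'I_n) :
  Lstep u v -> Lstep (a ++ u ++ b) (a ++ v ++ b).
Proof.
case=> [u' v' i|u' v' x y t].
- by move: (Lstep_inv (a ++ u') (v' ++ b) i); rewrite -!catA.
- by move: (Lstep_rel (a ++ u') (v' ++ b) x y t); rewrite -!catA.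
Qed.

Lemma Lequiv_frame (a b : seq 'I_n) {u v : seq 'I_n} :
  Lequiv u v -> Lequiv (a ++ u ++ b) (a ++ v ++ b).
Proof.
elim=> [x y Hxy|x|x y _ IH|x y z _ IHxy _ IHyz].
- exact/rst_step/Lstep_frame.
- reflexivity.
- exact: symmetry IH.
- exact: transitivity IHxy IHyz.
Qed.

#[local] Instance cat_Lequiv_Proper :
  Proper (@Lequiv n ==> @Lequiv n ==> @Lequiv n) cat.
Proof.
move=> u u' Hu v v' Hv.
have := Lequiv_frame [::] v Hu; rewrite /= => ->.
by have := Lequiv_frame u' [::] Hv; rewrite !cats0.
Qed.

#[local] Instance cons_Lequiv_Proper :
  Proper (eq ==> @Lequiv n ==> @Lequiv n) cons.
Proof. by move=> i _ <- u v /(Lequiv_frame [:: i] [::]); rewrite !cats0. Qed.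

Lemma Lequiv_cancel u v i : Lequiv (u ++ [:: i; i] ++ v) (u ++ v).
Proof. exact/rst_step/Lstep_inv. Qed.

Lemma Lequiv_swap u v (a b c : 'I_n) :
  Lequiv (u ++ [:: a; b; c] ++ v) (u ++ [:: c; b; a] ++ v).
Proof. exact/rst_step/Lstep_rel. Qed.

End WordCongruence.

#[export] Existing Instance Lequiv_Equivalence.
#[export] Existing Instance cat_Lequiv_Proper.
#[export] Existing Instance cons_Lequiv_Proper.
#[export] Hint Extern 0 (Lequiv _ _) => reflexivity : core.

Section SemidirectProduct.
Context {m : nat}.
Implicit Types p q r : sdelt m.

Lemma sdmulA p q r : sdmul p (sdmul q r) = sdmul (sdmul p q) r.
Proof.
case: p q r => [a x] [b y] [c t]; rewrite /sdmul /sdact /=; congr pair.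
- by case: x; case: y; rewrite /= ?opprD ?opprK addrA.
- by case: x; case: y; case: t.
Qed.

Lemma sdmul1l p : sdmul (sdone m) p = p.
Proof. by case: p => l b; rewrite /sdmul /sdact /= add0r. Qed.

Lemma coord_sumD (l l' : 'rV[int]_m) :
  coord_sum (l + l') = coord_sum l + coord_sum l'.
Proof.
by rewrite /coord_sum -big_split; apply: eq_bigr => j _; rewrite mxE.
Qed.

Lemma coord_sumN (l : 'rV[int]_m) : coord_sum (- l) = - coord_sum l.
Proof. by rewrite /coord_sum -sumrN; apply: eq_bigr => j _; rewrite mxE. Qed.

Lemma coord_sum0 : coord_sum (0 : 'rV[int]_m) = 0.
Proof. by rewrite /coord_sum big1 // => j _; rewrite mxE. Qed.

Lemma coord_sum_stdbasis (i : 'I_m) : coord_sum (stdbasis i) = 1.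
Proof.
rewrite /coord_sum (bigD1 i) //= big1 ?addr0; first by rewrite mxE !eqxx.
by move=> j /negbTE Hj; rewrite mxE Hj andbF.
Qed.

Lemma image_parityE p :
  Lcirc p \/ Ltau p <-> coord_sum p.1 = (p.2 : bool)%:R.
Proof.
case: p => l [] /=; rewrite /Lcirc /Ltau /=.
- by split=> [[[]//|[]//]|]; right.
- by split=> [[[]//|[]//]|]; left.
Qed.

End SemidirectProduct.

Section WordMorphism.
Context {n : nat}.
Implicit Types (u v w : seq 'I_n) (i : 'I_n).

Lemma phi_cons i w : phi (i :: w) = sdmul (gen_img i) (phi w).
Proof. by []. Qed.

Lemma phi_cat u v : phi (u ++ v) = sdmul (phi u) (phi v).
Proof.
elim: u => [|i u IH] /=; first by rewrite sdmul1l.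
by rewrite IH sdmulA.
Qed.

Lemma phi_sq i : phi [:: i; i] = sdone n.
Proof. by rewrite /phi /= /sdmul /sdact /sdone /= oppr0 addr0 addrN. Qed.

Lemma phi_swap (a b c : 'I_n) : phi [:: a; b; c] = phi [:: c; b; a].
Proof.
rewrite /phi /= /sdmul /sdact /sdone /= oppr0 !addr0; congr pair.
by rewrite !opprD !opprK addrCA [RHS]addrCA [stdbasis a + _]addrC.
Qed.

Lemma phi_Lequiv u v : Lequiv u v -> phi u = phi v.
Proof.
elim=> [x y []|x|x y _ ->|x y z _ -> _ ->] // u' v' *; rewrite !phi_cat.
- by rewrite phi_sq sdmul1l.
- by rewrite phi_swap.
Qed.

Lemma phi_parity w : coord_sum (phi w).1 = ((phi w).2 : bool)%:R.
Proof.
elim: w => [|i w]; first by rewrite /= coord_sum0.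
rewrite phi_cons; case: (phi w) => l c /= IH.
by rewrite /sdact coord_sumD coord_sum_stdbasis; case: c IH;
  rewrite ?coord_sumN => ->.
Qed.

End WordMorphism.

Section NormalForm.
Context {n : nat}.
Variable z : 'I_n.
Implicit Types (w : seq 'I_n) (i j : 'I_n).

(* tpow i k is the word (g_i g_z)^k, read as (g_z g_i)^(-k) for k < 0. *)
Definition tpow i (k : int) : seq 'I_n :=
  match k with
  | Posz m => flatten (nseq m [:: i; z])
  | Negz m => flatten (nseq m.+1 [:: z; i])
  end.

Definition tword (s : seq 'I_n) (l : 'rV[int]_n) : seq 'I_n :=
  flatten [seq tpow j (l 0 j) | j <- s].

Definition nf (p : sdelt n) : seq 'I_n :=
  tword (index_enum 'I_n) p.1 ++ (if p.2 then [:: z] else [::]).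

Lemma z_tpow i k : Lequiv (z :: tpow i k) (tpow i (- k) ++ [:: z]).
Proof.
case: k => [[|m]|m] /=; first by [].
- by rewrite flatten_nseq_shift.
- set F := flatten (nseq m [:: z; i]).
  have -> : [:: i, z & flatten (nseq m [:: i; z]) ++ [:: z]] =
            (i :: F) ++ [:: z; z] ++ [::].
    by rewrite cats0 -cat_cons flatten_nseq_shift -catA.
  rewrite -[[:: z, z, i & F]]/([::] ++ [:: z; z] ++ i :: F).
  by rewrite !Lequiv_cancel cats0.
Qed.

Lemma z_tword s l : Lequiv (z :: tword s l) (tword s (- l) ++ [:: z]).
Proof.
elim: s => [|j s IH] /=; first reflexivity.
rewrite /tword /= -/(tword s l) -/(tword s (- l)) mxE -cat_cons z_tpow.
by rewrite -!catA cat_cons IH.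
Qed.

Lemma Lequiv_commute_pow (x y : seq 'I_n) (m : nat) :
  Lequiv (x ++ y) (y ++ x) ->
  Lequiv (x ++ flatten (nseq m y)) (flatten (nseq m y) ++ x).
Proof.
move=> xy; elim: m => [|m IH] /=; first by rewrite cats0.
by rewrite catA xy -!catA IH.
Qed.

(* The elements g_i g_z pairwise commute: this is where the relation
   abc = cba of L_n is used. *)
Lemma tpow_commute i j k :
  Lequiv ([:: i; z] ++ tpow j k) (tpow j k ++ [:: i; z]).
Proof.
case: k => m; apply: Lequiv_commute_pow => /=.
- exact: (Lequiv_swap [::] [:: z] i z j).
- rewrite -[[:: i; z; z; j]]/([:: i] ++ [:: z; z] ++ [:: j]) Lequiv_cancel /=.
  rewrite -[[:: z; j; i; z]]/([::] ++ [:: z; j; i] ++ [:: z]) Lequiv_swap /=.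
  by rewrite -[[:: i; j; z; z]]/([:: i; j] ++ [:: z; z] ++ [::]) Lequiv_cancel.
Qed.

Lemma tpowS i k : Lequiv ([:: i; z] ++ tpow i k) (tpow i (k + 1)).
Proof.
case: k => [m|m] /=; first by rewrite addn1.
rewrite -[[:: i, z, z, i & _]]/([:: i] ++ [:: z; z] ++ i :: _) Lequiv_cancel /=.
rewrite -[[:: i, i & _]]/([::] ++ [:: i; i] ++ _) Lequiv_cancel.
by case: m => //= m; rewrite subn1.
Qed.

Lemma tword_shift s l i : uniq s -> i \in s ->
  Lequiv ([:: i; z] ++ tword s l) (tword s (l + stdbasis i)).
Proof.
elim: s => [|j s IH] //= /andP [js us].
rewrite /tword /= -/(tword s l) -/(tword s (l + stdbasis i)).
rewrite in_cons !mxE eqxx /=.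
have [-> _|_ /= si] := eqVneq i j.
- have -> : tword s (l + stdbasis j) = tword s l.
    congr flatten; apply/eq_in_map => k ks; rewrite !mxE eqxx /=.
    by case: eqVneq => [kj|]; [move: js; rewrite -kj ks | rewrite addr0].
  by rewrite -[[:: j, z & _]]/(([:: j; z] ++ _) ++ _) tpowS.
- rewrite addr0 -[[:: i, z & _]]/(([:: i; z] ++ _) ++ _).
  by rewrite tpow_commute -catA IH.
Qed.

Lemma nf_cons i p : Lequiv (i :: nf p) (nf (sdmul (gen_img i) p)).
Proof.
have tw_add l : Lequiv ([:: i; z] ++ tword (index_enum 'I_n) l)
                       (tword (index_enum 'I_n) (l + stdbasis i)).
  by apply: tword_shift; [exact: index_enum_uniq | exact: mem_index_enum].
case: p => l [] /=; rewrite /nf /sdmul /sdact /= cats0 addrC -tw_add.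
- by rewrite /= z_tword opprK.
- rewrite /= -[z :: _ ++ _]cat_cons z_tword opprK -catA.
  by symmetry; have := Lequiv_cancel (i :: tword (index_enum 'I_n) l) [::] z;
    rewrite !cats0.
Qed.

Lemma tword0 s : tword s 0 = [::].
Proof. by elim: s => //= j s; rewrite /tword /= mxE => ->. Qed.

Lemma Lequiv_nf w : Lequiv w (nf (phi w)).
Proof.
elim: w => [|i w IH]; first by rewrite /nf /= tword0.
by rewrite phi_cons -nf_cons -IH.
Qed.

Lemma phi_tpow j k : phi (tpow j k) = (k *: (stdbasis j - stdbasis z), false).
Proof.
have phi_pow a b m : phi (flatten (nseq m [:: a; b])) =
                     (Posz m *: (stdbasis a - stdbasis b), false).
  elim: m => [|m IH]; first by rewrite scale0r.
  rewrite -[flatten _]/([:: a; b] ++ _) phi_cat IH /phi /sdmul /sdact /=.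
  by rewrite oppr0 addr0 -[Posz m.+1]/(1 + Posz m) scalerDl scale1r.
case: k => m; rewrite /tpow phi_pow //.
by rewrite NegzE scaleNr -scalerN opprB.
Qed.

Lemma phi_tword_enum l :
  phi (tword (index_enum 'I_n) l) = (l - coord_sum l *: stdbasis z, false).
Proof.
have -> : phi (tword (index_enum 'I_n) l) =
          (\sum_(j <- index_enum 'I_n) l 0 j *: (stdbasis j - stdbasis z), false).
  elim: (index_enum 'I_n) => [|j s IH]; first by rewrite big_nil.
  by rewrite /tword /= phi_cat -/(tword s l) IH phi_tpow big_cons.
congr pair; rewrite /coord_sum scaler_suml.
rewrite [in X in _ = X - _](row_sum_delta l) -sumrB.
by apply: eq_bigr => j _; rewrite scalerBr.
Qed.

Lemma phi_nf p : coord_sum p.1 = (p.2 : bool)%:R -> phi (nf p) = p.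
Proof.
case: p => l [] /= Hsum; rewrite /nf /= ?cats0 ?phi_cat phi_tword_enum Hsum.
- by rewrite scale1r /phi /= /sdmul /sdact /sdone /= oppr0 addr0 subrK.
- by rewrite scale0r subr0.
Qed.

End NormalForm.

Lemma words_I0_nil (w : seq 'I_0) : w = [::].
Proof. by case: w => [|[k Hk]]. Qed.

Lemma phi_inj {n : nat} (w w' : seq 'I_n) : phi w = phi w' -> Lequiv w w'.
Proof.
case: n w w' => [|m] w w' E.
- by rewrite (words_I0_nil w) (words_I0_nil w').
- transitivity (nf ord0 (phi w)); first exact: Lequiv_nf.
  by rewrite E -Lequiv_nf.
Qed.

Lemma phi_image {n : nat} (p : sdelt n) :
  (exists w, phi w = p) <-> coord_sum p.1 = (p.2 : bool)%:R.
Proof.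
split=> [[w <-]|]; first exact: phi_parity.
case: n p => [|m] [l b] /= par; last by exists (nf ord0 (l, b)); exact: phi_nf.
(* over the empty alphabet the parity condition forces p = sdone 0 *)
exists [::]; move: par; rewrite (thinmx0 l) coord_sum0.
by case: b => // /eqP; rewrite eq_sym oner_eq0.
Qed.

Section DropFirstCoordinate.
Context {m : nat}.
Implicit Types p q : sdelt m.+1.

Definition tail_row (l : 'rV[int]_m.+1) : 'rV[int]_m :=
  \row_j l 0 (lift ord0 j).

Definition drop_first p : sdelt m := (tail_row p.1, p.2).

(* It is a morphism, since tau acts coordinatewise. *)
Lemma drop_first_mul p q :
  drop_first (sdmul p q) = sdmul (drop_first p) (drop_first q).
Proof.
case: p q => [l []] [l' b]; rewrite /drop_first /sdmul /sdact /=;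
  by congr pair; apply/rowP => j; rewrite !mxE.
Qed.

Lemma coord_sum_first (l : 'rV[int]_m.+1) :
  coord_sum l = l 0 ord0 + coord_sum (tail_row l).
Proof.
rewrite /coord_sum big_ord_recl; congr (_ + _).
by apply: eq_bigr => j _; rewrite mxE.
Qed.

(* Under the parity condition the first coordinate is determined by the
   others, so drop_first is injective on L^o u L^tau ... *)
Lemma drop_first_inj p q :
  coord_sum p.1 = (p.2 : bool)%:R -> coord_sum q.1 = (q.2 : bool)%:R ->
  drop_first p = drop_first q -> p = q.
Proof.
case: p q => [l b] [l' b'] /= par par' [El Eb]; subst b'.
have E0 : l 0 ord0 = l' 0 ord0.
  by move: par'; rewrite -par !coord_sum_first El => /addIr ->.
congr pair; apply/rowP => k; case: (unliftP ord0 k) => [j ->|->] //.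
by have := congr1 (fun r : 'rV[int]_m => r 0 j) El; rewrite /= !mxE.
Qed.

Lemma drop_first_surj (r : sdelt m) :
  exists p, coord_sum p.1 = (p.2 : bool)%:R /\ drop_first p = r.
Proof.
case: r => mu b.
pose l : 'rV[int]_m.+1 := \row_k
  (if unlift ord0 k is Some j then mu 0 j else (b : bool)%:R - coord_sum mu).
have El : tail_row l = mu by apply/rowP => j; rewrite !mxE liftK.
exists (l, b); split; last by rewrite /drop_first El.
by rewrite /= coord_sum_first El mxE unlift_none subrK.
Qed.

End DropFirstCoordinate.

Theorem proposition6p1 (n : nat) :
  ((forall w w' : seq 'I_n, phi (w ++ w') = sdmul (phi w) (phi w')) /\
   (forall w w' : seq 'I_n, Lequiv w w' <-> phi w = phi w')) /\
  (forall p : sdelt n, (exists w : seq 'I_n, phi w = p) <-> (Lcirc p \/ Ltau p)) /\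
  ((0 < n)%N ->
   exists f : seq 'I_n -> sdelt n.-1,
     (forall w w', f (w ++ w') = sdmul (f w) (f w')) /\
     (forall w w', Lequiv w w' <-> f w = f w') /\
     (forall p : sdelt n.-1, exists w, f w = p)).
Proof.
split; [split|split].
- exact: phi_cat.
- by move=> w w'; split; [exact: phi_Lequiv | exact: phi_inj].
- by move=> p; rewrite image_parityE; exact: phi_image.
case: n => [//|m] _; exists (fun w => drop_first (phi w)); split; [|split].
- by move=> w w'; rewrite phi_cat drop_first_mul.
- move=> w w'; split=> [/phi_Lequiv -> // | E].
  by apply: phi_inj; apply: drop_first_inj E; apply: phi_parity.
- move=> r; have [p [par <-]] := drop_first_surj r.
  by have [w <-] := (phi_image p).2 par; exists w.
Qed.
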